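(* Let $G=(V,E)$ be a finite graph, $A\subset V$, $h\in\mathbb R^V$, $T>0$, and let $(\xi^+,\xi^-),(\zeta^+,\zeta^-)\in(\{-1,1\}^A)^2$ satisfy $\xi^+_v\le\zeta^+_v$ and $\xi^-_v\ge\zeta^-_v$ for all $v\in A$. Then for every increasing event $\mathtt A\subset\Theta^{\bar G}$, $$\bar\mu^{\xi^+/\xi^-}_{G,h}(\mathtt A)\le\bar\mu^{\zeta^+/\zeta^-}_{G,h}(\mathtt A).$$
   Context: Extended Ising model: for a finite graph $G=(V,E)$ let $\bar G=V\cup E$. An extended configuration $\bar\sigma$ assigns $\bar\sigma_v\in\{-1,1\}$ to each $v\in V$ and $\bar\sigma_e\in\{-1,0,1\}$ to each $e\in E$, subject to $|\bar\sigma_v-\bar\sigma_e|\le1$ whenever $v$ is an endpoint of $e$. For $T>0$ and $h\in\mathbb R^V$, $\bar\mu_{G,h}(\bar\sigma)\propto\prod_{e\in E}\prod_{v\in e}W(\bar\sigma_v,\bar\sigma_e)\cdot\exp\big(\frac1T\sum_{v\in V}h_v\bar\sigma_v\big)$, where $W(a,b)=1$ if $b=a$, $t$ if $b=0$, $0$ if $b=-a$, and $t=(e^{2/T}-1)^{-1/2}$. For $A\subset V$ and $\xi\in\{-1,1\}^A$, $\bar\mu^{\xi}_{G,h}$ is $\bar\mu_{G,h}$ conditioned on $\bar\sigma_v=\xi_v$, $v\in A$. $\bar\mu^{\xi^+/\xi^-}_{G,h}=\bar\mu^{\xi^+}_{G,h}\otimes\bar\mu^{\xi^-}_{G,h}$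 is a law on pairs $(\bar\sigma^1,\bar\sigma^2)$, viewed as elements of $\Theta^{\bar G}$, $\Theta=\{-1,0,1\}^2$. Partial order on $\Theta$: $(a,b)\succeq(c,d)$ iff $a\ge c$ and $b\le d$, extended coordinatewise; an event is increasing if it is closed upward under this order. *)

From HB Require Import structures.
From mathcomp Require Import all_boot all_order all_algebra.
From mathcomp Require Import reals.
From mathcomp Require Import sequences exp.
Set Implicit Arguments. Unset Strict Implicit. Unset Printing Implicit Defensive.
Import Order.TTheory GRing.Theory Num.Theory.
Local Open Scope ring_scope.

Definition simple_graph (V E : finType) (ends : E -> {set V}) : Prop :=
  (forall e, #|ends e| = 2%N) /\ injective ends.

(* The spin value set {-1,0,1}, encoded by 'I_3 : i |-> i - 1. *)
Definition val3 (i : 'I_3) : int := (i : nat)%:Z - 1.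

(* Ḡ = V ⊔ E ; an element of {-1,0,1}^Ḡ. *)
Definition xconfig (V E : finType) := {ffun (V + E)%type -> 'I_3}.

Definition vspin (V E : finType) (s : xconfig V E) (v : V) : int := val3 (s (inl v)).
Definition espin (V E : finType) (s : xconfig V E) (e : E) : int := val3 (s (inr e)).

Definition valid_xconfig (V E : finType) (ends : E -> {set V}) (s : xconfig V E) : bool :=
  [forall v, vspin s v != 0] &&
  [forall e, forall v, (v \in ends e) ==> (`|vspin s v - espin s e| <= 1)].

Section Weights.
Variable R : realType.

Definition tpar (T : R) : R := (Num.sqrt (expR (2 / T) - 1))^-1.

Definition Wfun (T : R) (a b : int) : R :=
  if b == a then 1 else if b == 0 then tpar T else 0.

Definition xweight (V E : finType) (ends : E -> {set V}) (T : R) (h : V -> R)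
    (s : xconfig V E) : R :=
  (valid_xconfig ends s)%:R *
  (\prod_(e : E) \prod_(v in ends e) Wfun T (vspin s v) (espin s e)) *
  expR (T^-1 * \sum_(v : V) h v * (vspin s v)%:~R).

Definition xweight_bc (V E : finType) (ends : E -> {set V}) (T : R) (h : V -> R)
    (A : {set V}) (xi : V -> int) (s : xconfig V E) : R :=
  [forall v in A, vspin s v == xi v]%:R * xweight ends T h s.

Definition xmu (V E : finType) (ends : E -> {set V}) (T : R) (h : V -> R)
    (A : {set V}) (xi : V -> int) (s : xconfig V E) : R :=
  xweight_bc ends T h A xi s / \sum_(s' : xconfig V E) xweight_bc ends T h A xi s'.

(* product measure μ̄^{ξ+/ξ-} of an event on pairs (Θ^Ḡ with Θ = {-1,0,1}^2) *)
Definition xmu_pair (V E : finType) (ends : E -> {set V}) (T : R) (h : V -> R)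
    (A : {set V}) (xip xim : V -> int)
    (Ev : {set (xconfig V E * xconfig V E)}) : R :=
  \sum_(p in Ev) xmu ends T h A xip p.1 * xmu ends T h A xim p.2.
End Weights.

Definition theta_ge (V E : finType) (p q : xconfig V E * xconfig V E) : bool :=
  [forall x, (val3 (q.1 x) <= val3 (p.1 x)) && (val3 (p.2 x) <= val3 (q.2 x))].

Definition increasing_event (V E : finType) (Ev : {set (xconfig V E * xconfig V E)}) : Prop :=
  forall p q, p \in Ev -> theta_ge q p -> q \in Ev.

Definition pm1 (z : int) : Prop := z = 1 \/ z = -1.

From HB Require Import structures.
From mathcomp Require Import all_boot all_order all_algebra.
From mathcomp Require Import reals.
From mathcomp Require Import sequences exp.
From mathcomp Require Import lra ring.
Set Implicit Arguments. Unset Strict Implicit. Unset Printing Implicit Defensive.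
Import Order.TTheory GRing.Theory Num.Theory.
Local Open Scope ring_scope.

(* The Ahlswede-Daykin four-functions inequality holds on the two-point lattice,
   hence on products and sublattices of it, in particular on every finite power
   of the chain {-1 < 0 < 1} ordered pointwise.  For boundary conditions
   xi <= zeta the conditioned weights satisfy Holley's lattice condition
   w^xi(x) w^zeta(y) <= w^zeta(x \/ y) w^xi(x /\ y): the edge factor W passes
   the test case by case, the field factor is the exponential of a linear
   function of the spins, and validity and boundary constraints are stable
   under pointwise max/min.  Holley's inequality then gives
   mu^xi(f) <= mu^zeta(f) for increasing f >= 0, and the reverse for decreasing
   f.  An increasing event of pairs is increasing in the first coordinate and
   decreasing in the second, so the two boundary conditions can be changed one
   at a time. *)

Section FourFunctions.
Variable R : realFieldType.

Definition four_functions (T : finType) (join meet : T -> T -> T) : Prop :=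
  forall a b c d : T -> R,
  (forall x, 0 <= a x) -> (forall x, 0 <= b x) ->
  (forall x, 0 <= c x) -> (forall x, 0 <= d x) ->
  (forall x y, a x * b y <= c (join x y) * d (meet x y)) ->
  (\sum_x a x) * (\sum_x b x) <= (\sum_x c x) * (\sum_x d x).

Lemma four_functions_dual (T : finType) (join meet : T -> T -> T) :
  four_functions join meet -> four_functions meet join.
Proof.
move=> FF a b c d a0 b0 c0 d0 abcd; rewrite [X in _ <= X]mulrC.
by apply: (FF a b d c) => // x y; rewrite [X in _ <= X]mulrC.
Qed.

Lemma add_le_of_mul_le (A B C D : R) : 0 <= A -> 0 <= B -> 0 <= D ->
  A <= C -> B <= C -> A * B <= C * D -> A + B <= C + D.
Proof.
move=> A0 B0 D0 AC BC ABCD; have [C0|C0] := eqVneq C 0.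
  by rewrite C0 in AC BC *; lra.
have Cgt0 : 0 < C by rewrite lt0r C0; lra.
rewrite -(ler_pM2l Cgt0).
have : 0 <= (C - A) * (C - B) by apply: mulr_ge0; lra.
nra.
Qed.

Lemma four_functions_bool : four_functions orb andb.
Proof.
move=> a b c d a0 b0 c0 d0 abcd; rewrite !big_bool /=.
have ab00 := abcd false false; have ab11 := abcd true true.
have ab01 := abcd false true; have ab10 := abcd true false; rewrite /= in ab00 ab11 ab01 ab10.
have cross : a false * b true + a true * b false <= c true * d false + c false * d true.
  apply: add_le_of_mul_le => //; try by apply: mulr_ge0.
  have -> : a false * b true * (a true * b false) = (a false * b false) * (a true * b true) by ring.
  have -> : c true * d false * (c false * d true) = (c false * d false) * (c true * d true) by ring.
  by apply: ler_pM => //; apply: mulr_ge0.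
have -> : (a true + a false) * (b true + b false) =
  a true * b true + a false * b false + (a false * b true + a true * b false) by ring.
have -> : (c true + c false) * (d true + d false) =
  c true * d true + c false * d false + (c true * d false + c false * d true) by ring.
lra.
Qed.

Lemma four_functions_prod (T1 T2 : finType) (join1 meet1 : T1 -> T1 -> T1)
    (join2 meet2 : T2 -> T2 -> T2) :
  four_functions join1 meet1 -> four_functions join2 meet2 ->
  four_functions (fun x y : T1 * T2 => (join1 x.1 y.1, join2 x.2 y.2))
                 (fun x y : T1 * T2 => (meet1 x.1 y.1, meet2 x.2 y.2)).
Proof.
move=> FF1 FF2 a b c d a0 b0 c0 d0 abcd.
have sum_pair (F : T1 * T2 -> R) : \sum_p F p = \sum_x1 \sum_x2 F (x1, x2).
  by rewrite pair_bigA; apply: eq_bigr => -[].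
rewrite !sum_pair; apply: FF1 => [x|x|x|x|x1 y1]; try exact: sumr_ge0.
exact: (FF2 (fun x2 => a (x1, x2)) (fun x2 => b (y1, x2))
            (fun x2 => c (join1 x1 y1, x2)) (fun x2 => d (meet1 x1 y1, x2))).
Qed.

(* Push the four functions forward along [f], summing over fibres. *)
Lemma four_functions_inj (S T : finType) (joinS meetS : S -> S -> S)
    (joinT meetT : T -> T -> T) (f : S -> T) :
  injective f -> {morph f : x y / joinS x y >-> joinT x y} ->
  {morph f : x y / meetS x y >-> meetT x y} ->
  four_functions joinT meetT -> four_functions joinS meetS.
Proof.
move=> f_inj f_join f_meet FF a b c d a0 b0 c0 d0 abcd.
have fibre_sum (F : S -> R) : \sum_t \sum_(s | f s == t) F s = \sum_s F s.
  by rewrite (partition_big f xpredT).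
have fibre_image (F : S -> R) s : \sum_(s' | f s' == f s) F s' = F s.
  by apply: big_pred1 => s' /=; apply/eqP/eqP => [/f_inj|->].
rewrite -!fibre_sum; apply: FF => [t|t|t|t|t u]; try exact: sumr_ge0.
have [s /eqP <-|no_s] := pickP (fun s => f s == t); last first.
  by rewrite big_pred0 // mul0r; apply: mulr_ge0; apply: sumr_ge0.
have [s' /eqP <-|no_s'] := pickP (fun s => f s == u); last first.
  by rewrite (big_pred0 _ _ _ _ no_s') mulr0; apply: mulr_ge0; apply: sumr_ge0.
by rewrite -f_join -f_meet !fibre_image.
Qed.

Lemma four_functions_unit : four_functions (fun _ _ : unit => tt) (fun _ _ => tt).
Proof.
apply: (@four_functions_inj _ _ _ _ orb andb (fun _ => false)) => //.
  by move=> [] [].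
exact: four_functions_bool.
Qed.

Section FunctionLattice.
Variables (T : finType) (join meet : T -> T -> T).
Hypothesis FF : four_functions join meet.

Definition ffun_lift (I : finType) (op : T -> T -> T) (x y : {ffun I -> T}) :
  {ffun I -> T} := [ffun i => op (x i) (y i)].

Lemma four_functions_ffun_ord n :
  four_functions (@ffun_lift 'I_n join) (ffun_lift meet).
Proof.
elim: n => [|n IHn].
  apply: (@four_functions_inj _ _ _ _ _ _ (fun _ => tt)) four_functions_unit => //.
  by move=> x y _; apply/ffunP => -[].
pose split_head (x : {ffun 'I_n.+1 -> T}) : T * {ffun 'I_n -> T} :=
  (x ord0, [ffun i => x (lift ord0 i)]).
apply: (@four_functions_inj _ _ _ _ _ _ split_head) (four_functions_prod FF IHn).
- move=> x y [x0y0 xy]; apply/ffunP => i.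
  case: (unliftP ord0 i) => [j ->|->] //.
  by have := congr1 (fun z : {ffun 'I_n -> T} => z j) xy; rewrite !ffunE.
- by move=> x y; rewrite /split_head ffunE; congr pair; apply/ffunP => i; rewrite !ffunE.
- by move=> x y; rewrite /split_head ffunE; congr pair; apply/ffunP => i; rewrite !ffunE.
Qed.

Lemma four_functions_ffun (I : finType) :
  four_functions (@ffun_lift I join) (ffun_lift meet).
Proof.
pose reindex (x : {ffun I -> T}) : {ffun 'I_#|I| -> T} := [ffun k => x (enum_val k)].
apply: (@four_functions_inj _ _ _ _ _ _ reindex) (@four_functions_ffun_ord #|I|).
- move=> x y xy; apply/ffunP => i.
  have := congr1 (fun z : {ffun 'I_#|I| -> T} => z (enum_rank i)) xy.
  by rewrite !ffunE enum_rankK.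
- by move=> x y; apply/ffunP => k; rewrite /reindex !ffunE.
- by move=> x y; apply/ffunP => k; rewrite /reindex !ffunE.
Qed.

End FunctionLattice.

Section Holley.
Variables (T : finType) (join meet : T -> T -> T) (w1 w2 : T -> R).
Hypothesis FF : four_functions join meet.
Hypotheses (w1_ge0 : forall x, 0 <= w1 x) (w2_ge0 : forall x, 0 <= w2 x).
Hypotheses (Z1_gt0 : 0 < \sum_x w1 x) (Z2_gt0 : 0 < \sum_x w2 x).
Hypothesis w_lattice : forall x y, w1 x * w2 y <= w2 (join x y) * w1 (meet x y).

Lemma holley_increasing (f : T -> R) : (forall x, 0 <= f x) ->
  (forall x y, f x <= f (join x y)) ->
  (\sum_x f x * w1 x) / (\sum_x w1 x) <= (\sum_x f x * w2 x) / (\sum_x w2 x).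
Proof.
move=> f_ge0 f_join; rewrite ler_pdivrMr // mulrAC ler_pdivlMr //.
apply: FF => [x|x|x|x|x y]; rewrite ?mulr_ge0 //.
by rewrite -!mulrA; apply: ler_pM; rewrite ?mulr_ge0.
Qed.

Hypotheses (joinC : commutative join) (meetC : commutative meet).

Lemma holley_decreasing (f : T -> R) : (forall x, 0 <= f x) ->
  (forall x y, f x <= f (meet x y)) ->
  (\sum_x f x * w2 x) / (\sum_x w2 x) <= (\sum_x f x * w1 x) / (\sum_x w1 x).
Proof.
move=> f_ge0 f_meet; rewrite ler_pdivrMr // mulrAC ler_pdivlMr //.
apply: (four_functions_dual FF) => [x|x|x|x|x y]; rewrite ?mulr_ge0 //.
rewrite -!mulrA; apply: ler_pM; rewrite ?mulr_ge0 //.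
by rewrite mulrC [X in _ <= X]mulrC joinC meetC.
Qed.

End Holley.

End FourFunctions.

Lemma four_functions_ord3 (R : realFieldType) :
  four_functions R (@Order.max _ 'I_3) Order.min.
Proof.
pose bits (i : 'I_3) := ((0 < i)%N, (1 < i)%N).
apply: (@four_functions_inj _ _ _ _ _
  (fun x y : bool * bool => (x.1 || y.1, x.2 || y.2))
  (fun x y : bool * bool => (x.1 && y.1, x.2 && y.2)) bits).
- by move=> [[|[|[|//]]] ?] [[|[|[|//]]] ?] /eqP //= _; apply/val_inj.
- by move=> [[|[|[|//]]] ?] [[|[|[|//]]] ?].
- by move=> [[|[|[|//]]] ?] [[|[|[|//]]] ?].
exact/four_functions_prod/four_functions_bool/four_functions_bool.
Qed.

Lemma val3_max (a b : 'I_3) : val3 (Order.max a b) = Num.max (val3 a) (val3 b).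
Proof. by case: a => [[|[|[|//]]] ?]; case: b => [[|[|[|//]]] ?]. Qed.

Lemma val3_min (a b : 'I_3) : val3 (Order.min a b) = Num.min (val3 a) (val3 b).
Proof. by case: a => [[|[|[|//]]] ?]; case: b => [[|[|[|//]]] ?]. Qed.

Lemma Wfun_max_min (R : realType) (T : R) (a b c d : 'I_3) : 0 <= tpar T ->
  Wfun T (val3 a) (val3 b) * Wfun T (val3 c) (val3 d) <=
  Wfun T (val3 (Order.max a c)) (val3 (Order.max b d)) *
  Wfun T (val3 (Order.min a c)) (val3 (Order.min b d)).
Proof.
rewrite /Wfun; move: (tpar T) => t t_ge0.
case: a => [[|[|[|//]]] ?]; case: b => [[|[|[|//]]] ?];
case: c => [[|[|[|//]]] ?]; case: d => [[|[|[|//]]] ?];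
  rewrite /val3 /= ?mulr1 ?mul1r ?mulr0 ?mul0r //.
all: nra.
Qed.

Lemma spin_dist_max_min (a b c d : 'I_3) :
  `|val3 a - val3 b| <= 1 -> `|val3 c - val3 d| <= 1 ->
  `|val3 (Order.max a c) - val3 (Order.max b d)| <= 1 /\
  `|val3 (Order.min a c) - val3 (Order.min b d)| <= 1.
Proof.
by case: a => [[|[|[|//]]] ?]; case: b => [[|[|[|//]]] ?];
   case: c => [[|[|[|//]]] ?]; case: d => [[|[|[|//]]] ?].
Qed.

Section ExtendedIsing.
Variables (R : realType) (V E : finType) (ends : E -> {set V}) (T : R) (h : V -> R).
Variable A : {set V}.
Hypothesis T_gt0 : 0 < T.

Local Notation xconfig := (xconfig V E).
Local Notation w := (xweight_bc ends T h A).
Local Notation xmax := (ffun_lift (@Order.max _ 'I_3) : xconfig -> xconfig -> xconfig).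
Local Notation xmin := (ffun_lift (@Order.min _ 'I_3) : xconfig -> xconfig -> xconfig).

Definition boundary_ok (xi : V -> int) (s : xconfig) : bool :=
  [forall v in A, vspin s v == xi v].
Definition edge_weight (s : xconfig) : R :=
  \prod_(e : E) \prod_(v in ends e) Wfun T (vspin s v) (espin s e).
Definition field_weight (s : xconfig) : R :=
  expR (T^-1 * \sum_(v : V) h v * (vspin s v)%:~R).

Lemma xweight_bcE xi s : w xi s =
  (boundary_ok xi s)%:R * (valid_xconfig ends s)%:R * (edge_weight s * field_weight s).
Proof. by rewrite /xweight_bc /xweight !mulrA. Qed.

Lemma tpar_gt0 : 0 < tpar T.
Proof. by rewrite invr_gt0 sqrtr_gt0 subr_gt0 expR_gt1 divr_gt0. Qed.

Lemma Wfun_ge0 a b : 0 <= Wfun T a b.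
Proof. by rewrite /Wfun; case: ifP => // _; case: ifP => // _; apply: ltW tpar_gt0. Qed.

Lemma edge_weight_ge0 s : 0 <= edge_weight s.
Proof. by apply: prodr_ge0 => e _; apply: prodr_ge0 => v _; apply: Wfun_ge0. Qed.

Lemma xweight_bc_ge0 xi s : 0 <= w xi s.
Proof.
by rewrite xweight_bcE !mulr_ge0 ?edge_weight_ge0 // ltW // expR_gt0.
Qed.

Lemma vspin_max x y v : vspin (xmax x y) v = Num.max (vspin x v) (vspin y v).
Proof. by rewrite /vspin ffunE val3_max. Qed.

Lemma vspin_min x y v : vspin (xmin x y) v = Num.min (vspin x v) (vspin y v).
Proof. by rewrite /vspin ffunE val3_min. Qed.

Lemma valid_xconfig_max_min x y : valid_xconfig ends x -> valid_xconfig ends y ->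
  valid_xconfig ends (xmax x y) && valid_xconfig ends (xmin x y).
Proof.
move=> /andP[/forallP x_ne0 /forallP x_edge] /andP[/forallP y_ne0 /forallP y_edge].
have edge_max_min e v : v \in ends e ->
    `|vspin (xmax x y) v - espin (xmax x y) e| <= 1 /\
    `|vspin (xmin x y) v - espin (xmin x y) e| <= 1.
  move=> ve; rewrite /vspin /espin !ffunE; apply: spin_dist_max_min.
  - exact: implyP (forallP (x_edge e) v) ve.
  - exact: implyP (forallP (y_edge e) v) ve.
apply/andP; split; apply/andP; split; apply/forallP.
- by move=> v; rewrite vspin_max maxEle; case: ifP.
- by move=> e; apply/forallP => v; apply/implyP => /(edge_max_min e) [].
- by move=> v; rewrite vspin_min minEle; case: ifP.
- by move=> e; apply/forallP => v; apply/implyP => /(edge_max_min e) [].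
Qed.

Lemma boundary_ok_max_min xi ze x y : (forall v, v \in A -> xi v <= ze v) ->
  boundary_ok xi x -> boundary_ok ze y ->
  boundary_ok ze (xmax x y) && boundary_ok xi (xmin x y).
Proof.
move=> xi_le /forall_inP x_bc /forall_inP y_bc.
apply/andP; split; apply/forall_inP => v vA;
  rewrite ?vspin_max ?vspin_min (eqP (x_bc v vA)) (eqP (y_bc v vA)).
- by rewrite max_r ?xi_le.
- by rewrite min_l ?xi_le.
Qed.

Lemma edge_weight_max_min x y :
  edge_weight x * edge_weight y <= edge_weight (xmax x y) * edge_weight (xmin x y).
Proof.
rewrite /edge_weight -!big_split /=; apply: ler_prod => e _; apply/andP; split.
  by rewrite mulr_ge0 // prodr_ge0 // => v _; apply: Wfun_ge0.
rewrite -!big_split /=; apply: ler_prod => v _; apply/andP; split.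
  by rewrite mulr_ge0 ?Wfun_ge0.
by rewrite /vspin /espin !ffunE; apply/Wfun_max_min/ltW/tpar_gt0.
Qed.

Lemma field_weight_max_min x y :
  field_weight x * field_weight y = field_weight (xmax x y) * field_weight (xmin x y).
Proof.
rewrite /field_weight -!expRD -!mulrDr -!big_split /=; congr (expR (_ * _)).
apply: eq_bigr => v _.
by rewrite -!mulrDr -!intrD vspin_max vspin_min addr_max_min.
Qed.

Lemma xweight_bc_lattice xi ze x y : (forall v, v \in A -> xi v <= ze v) ->
  w xi x * w ze y <= w ze (xmax x y) * w xi (xmin x y).
Proof.
move=> xi_le.
have [/and4P[x_bc y_bc x_ok y_ok]|not_all] :=
  boolP [&& boundary_ok xi x, boundary_ok ze y, valid_xconfig ends x & valid_xconfig ends y].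
  have /andP[xy_bc yx_bc] := boundary_ok_max_min xi_le x_bc y_bc.
  have /andP[xy_ok yx_ok] := valid_xconfig_max_min x_ok y_ok.
  rewrite !xweight_bcE x_bc y_bc x_ok y_ok xy_bc yx_bc xy_ok yx_ok !mul1r.
  rewrite mulrACA [X in _ <= X]mulrACA field_weight_max_min.
  by rewrite ler_wpM2r ?edge_weight_max_min // mulr_ge0 // ltW // expR_gt0.
have -> : w xi x * w ze y = 0.
  rewrite !xweight_bcE; move: not_all.
  by case: (boundary_ok xi x); case: (boundary_ok ze y);
     case: (valid_xconfig ends x); case: (valid_xconfig ends y); rewrite //= !(mul0r, mulr0).
by rewrite mulr_ge0 ?xweight_bc_ge0.
Qed.

Lemma xweight_bc_sum_gt0 xi : (forall v, v \in A -> pm1 (xi v)) -> 0 < \sum_s w xi s.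
Proof.
move=> xi_pm1.
(* Vertices follow xi on A, all edges are 0: every edge factor is then t > 0. *)
pose s0 : xconfig := [ffun z => if z is inl v
  then (if (v \in A) && (xi v == -1) then ord0 else ord_max) else inord 1].
have s0_v v : vspin s0 v = if (v \in A) && (xi v == -1) then -1 else 1.
  by rewrite /vspin ffunE; case: ifP.
have s0_e e : espin s0 e = 0 by rewrite /espin ffunE /val3 inordK.
have s0_pos : 0 < w xi s0.
  rewrite xweight_bcE.
  have -> : boundary_ok xi s0.
    by apply/forall_inP => v vA; rewrite s0_v vA; case: (xi_pm1 v vA) => ->.
  have -> : valid_xconfig ends s0.
    apply/andP; split; apply/forallP; first by move=> v; rewrite s0_v; case: ifP.
    by move=> e; apply/forallP => v; apply/implyP => _; rewrite s0_e subr0 s0_v; case: ifP.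
  rewrite !mul1r mulr_gt0 ?expR_gt0 //; apply: prodr_gt0 => e _; apply: prodr_gt0 => v _.
  by rewrite /Wfun s0_e s0_v; case: ifP; rewrite /= ?tpar_gt0.
rewrite (bigD1 s0) //=; apply: ltr_wpDr s0_pos.
by apply: sumr_ge0 => s _; apply: xweight_bc_ge0.
Qed.

Lemma xmu_sumE xi (f : xconfig -> R) :
  \sum_s f s * xmu ends T h A xi s = (\sum_s f s * w xi s) / \sum_s w xi s.
Proof. by rewrite /xmu mulr_suml; apply: eq_bigr => s _; rewrite mulrA. Qed.

Lemma xmu_ge0 xi s : 0 <= xmu ends T h A xi s.
Proof.
by rewrite divr_ge0 ?xweight_bc_ge0 // sumr_ge0 // => s' _; apply: xweight_bc_ge0.
Qed.

Section Monotonicity.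
Variables (xi ze : V -> int) (f : xconfig -> R).
Hypotheses (xi_pm1 : forall v, v \in A -> pm1 (xi v))
           (ze_pm1 : forall v, v \in A -> pm1 (ze v)).
Hypothesis xi_le : forall v, v \in A -> xi v <= ze v.
Hypothesis f_ge0 : forall s, 0 <= f s.

Let FF : four_functions R xmax xmin :=
  @four_functions_ffun R _ _ _ (@four_functions_ord3 R) (V + E)%type.

Let w_lattice x y : w xi x * w ze y <= w ze (xmax x y) * w xi (xmin x y).
Proof. exact: xweight_bc_lattice. Qed.

Lemma xmu_increasing : (forall x y, f x <= f (xmax x y)) ->
  \sum_s f s * xmu ends T h A xi s <= \sum_s f s * xmu ends T h A ze s.
Proof.
move=> f_incr; rewrite !xmu_sumE.
exact: (holley_increasing FF (xweight_bc_ge0 xi) (xweight_bc_ge0 ze)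
  (xweight_bc_sum_gt0 xi_pm1) (xweight_bc_sum_gt0 ze_pm1) w_lattice).
Qed.

Lemma xmu_decreasing : (forall x y, f x <= f (xmin x y)) ->
  \sum_s f s * xmu ends T h A ze s <= \sum_s f s * xmu ends T h A xi s.
Proof.
move=> f_decr; rewrite !xmu_sumE.
have maxC' : commutative xmax by move=> x y; apply/ffunP => z; rewrite !ffunE maxC.
have minC' : commutative xmin by move=> x y; apply/ffunP => z; rewrite !ffunE minC.
exact: (holley_decreasing FF (xweight_bc_ge0 xi) (xweight_bc_ge0 ze)
  (xweight_bc_sum_gt0 xi_pm1) (xweight_bc_sum_gt0 ze_pm1) w_lattice maxC' minC').
Qed.

End Monotonicity.

Lemma increasing_event_max_fst (Ev : {set xconfig * xconfig}) x x' y :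
  increasing_event Ev -> (x, y) \in Ev -> (xmax x x', y) \in Ev.
Proof.
move=> Ev_incr xy_in; apply: Ev_incr xy_in _; apply/forallP => z /=.
by rewrite ffunE val3_max le_max !lexx.
Qed.

Lemma increasing_event_min_snd (Ev : {set xconfig * xconfig}) x y y' :
  increasing_event Ev -> (x, y) \in Ev -> (x, xmin y y') \in Ev.
Proof.
move=> Ev_incr xy_in; apply: Ev_incr xy_in _; apply/forallP => z /=.
by rewrite ffunE val3_min ge_min !lexx.
Qed.

End ExtendedIsing.

Section PairSums.
Variables (R : comNzRingType) (S : finType) (Ev : {set S * S}) (f g : S -> R).

Lemma sum_pair_in_fst :
  \sum_(p in Ev) f p.1 * g p.2 = \sum_x f x * \sum_y ((x, y) \in Ev)%:R * g y.
Proof.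
under [RHS]eq_bigr do rewrite mulr_sumr.
rewrite pair_bigA big_mkcond; apply: eq_bigr => -[x y] _ /=.
by case: ((x, y) \in Ev); rewrite ?mul1r ?mul0r ?mulr0.
Qed.

Lemma sum_pair_in_snd :
  \sum_(p in Ev) f p.1 * g p.2 = \sum_y g y * \sum_x ((x, y) \in Ev)%:R * f x.
Proof.
under [RHS]eq_bigr do rewrite mulr_sumr.
rewrite exchange_big pair_bigA big_mkcond; apply: eq_bigr => -[x y] _ /=.
by case: ((x, y) \in Ev); rewrite ?mul1r ?mul0r ?mulr0 // mulrC.
Qed.

End PairSums.

Theorem lemma2p4 (R : realType) (V E : finType) (ends : E -> {set V})
  (A : {set V}) (h : V -> R) (T : R)
  (xip xim zetap zetam : V -> int) (Ev : {set (xconfig V E * xconfig V E)}) :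
  simple_graph ends -> 0 < T ->
  (forall v, v \in A -> [/\ pm1 (xip v), pm1 (xim v), pm1 (zetap v) & pm1 (zetam v)]) ->
  (forall v, v \in A -> xip v <= zetap v /\ zetam v <= xim v) ->
  increasing_event Ev ->
  xmu_pair ends T h A xip xim Ev <= xmu_pair ends T h A zetap zetam Ev.
Proof.
(* The graph need not be simple for this argument. *)
move=> _ T_gt0 bc_pm1 bc_le Ev_incr.
have indicator_le (b b' : bool) : (b -> b') -> b%:R <= b'%:R :> R.
  by case: b => [->|_]; rewrite ?ler0n.
apply: (@le_trans _ _ (xmu_pair ends T h A zetap xim Ev)).
  rewrite /xmu_pair !sum_pair_in_snd; apply: ler_sum => y _.
  rewrite ler_wpM2l ?xmu_ge0 //; apply: xmu_increasing => //.
  - by move=> v /bc_pm1[].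
  - by move=> v /bc_pm1[].
  - by move=> v /bc_le[].
  - by move=> x x'; apply/indicator_le/increasing_event_max_fst.
rewrite /xmu_pair !sum_pair_in_fst; apply: ler_sum => x _.
rewrite ler_wpM2l ?xmu_ge0 //; apply: xmu_decreasing => //.
- by move=> v /bc_pm1[].
- by move=> v /bc_pm1[].
- by move=> v /bc_le[].
- by move=> y y'; apply/indicator_le/increasing_event_min_snd.
Qed.
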